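(* Let $G=(N,S,(u_i)_{i\in N})$ be a game with solution set $D\subseteq S$, and let $\alpha,\beta\ge1$. If over $D$ the utility of every player is $\beta$ varied and $\alpha$-lower dependent on coordination, then $\mathrm{PoTA}\ge \mathrm{PoA}/(\alpha\beta)$. If over $D$ the utility of every player is $\beta$ varied and $\alpha$-upper dependent on coordination, then $\mathrm{PoTS}\le\alpha\beta\,\mathrm{PoS}$.
   Context: $T(D)$ is the set of transitions: profiles $t$ such that for every $i$ there is $d\in D$ with $t_i=d_i$. $\mathrm{sw}(s)=\sum_iu_i(s)$, assumed to have positive maximum over $S$; minima/maxima are read as infima/suprema if not attained. $\mathrm{PoA}=\min_{D}\mathrm{sw}/\max_S\mathrm{sw}$, $\mathrm{PoS}=\max_D\mathrm{sw}/\max_S\mathrm{sw}$, $\mathrm{PoTA}=\min_{T(D)}\mathrm{sw}/\max_S\mathrm{sw}$, $\mathrm{PoTS}=\max_{T(D)}\mathrm{sw}/\max_S\mathrm{sw}$. Player $i$'s utility over $A\subseteq S$ is $\alpha$-lower dependent on coordination if $\min_{s\in T(A)}u_i(s)\ge\min_{t\in A}u_i(t)/\alpha$, and $\alpha$-upper dependent on coordination if $\max_{s\in T(A)}u_i(s)\le\alpha\max_{t\in A}u_i(t)$. Player $i$'s utility is $\beta$ varied over $A$ if for all $s,t\in A$, $\mathrm{sw}(s)\ge\mathrm{sw}(t)\Rightarrow u_i(s)\ge u_i(t)/\beta$. *)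

From HB Require Import structures.
From mathcomp Require Import all_boot all_order all_algebra.
From mathcomp Require Import all_classical all_reals all_analysis.
Set Implicit Arguments. Unset Strict Implicit. Unset Printing Implicit Defensive.
Import Order.TTheory GRing.Theory Num.Theory.
Local Open Scope classical_set_scope.
Local Open Scope ring_scope.

Section Game.
Variables (R : realType) (I : finType) (X : I -> Type).

Definition profile := forall i : I, X i.

Variable u : I -> profile -> R.

Definition transitions (A : set profile) : set profile :=
  [set t | forall i, exists2 d, A d & t i = d i].

Definition sw (s : profile) : R := \sum_(i : I) u i s.

(* sup over S of sw (extended reals: suprema/infima when not attained) *)
Definition maxS : \bar R := ereal_sup [set (sw s)%:E | s in setT].

Definition PoA (D : set profile) : \bar R :=
  (ereal_inf [set (sw s)%:E | s in D] * ((fine maxS)^-1)%:E)%E.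
Definition PoS (D : set profile) : \bar R :=
  (ereal_sup [set (sw s)%:E | s in D] * ((fine maxS)^-1)%:E)%E.
Definition PoTA (D : set profile) : \bar R :=
  (ereal_inf [set (sw s)%:E | s in transitions D] * ((fine maxS)^-1)%:E)%E.
Definition PoTS (D : set profile) : \bar R :=
  (ereal_sup [set (sw s)%:E | s in transitions D] * ((fine maxS)^-1)%:E)%E.

Definition lower_dependent (alpha : R) (i : I) (A : set profile) : Prop :=
  (ereal_inf [set (u i t)%:E | t in A] * (alpha^-1)%:E
     <= ereal_inf [set (u i s)%:E | s in transitions A])%E.

Definition upper_dependent (alpha : R) (i : I) (A : set profile) : Prop :=
  (ereal_sup [set (u i s)%:E | s in transitions A]
     <= alpha%:E * ereal_sup [set (u i t)%:E | t in A])%E.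

Definition varied (beta : R) (i : I) (A : set profile) : Prop :=
  forall s t, A s -> A t -> sw t <= sw s -> u i t / beta <= u i s.

End Game.

From HB Require Import structures.
From mathcomp Require Import all_boot all_order all_algebra.
From mathcomp Require Import all_classical all_reals all_analysis.
Set Implicit Arguments. Unset Strict Implicit. Unset Printing Implicit Defensive.
Import Order.TTheory GRing.Theory Num.Theory.
Local Open Scope classical_set_scope.
Local Open Scope ring_scope.

(* Fix a transition t.  By coordination dependence every player i has a
   solution s_i in D with u_i(s_i) <= alpha u_i(t) (lower case), resp.
   u_i(t) <= alpha u_i(s_i) (upper case).  Let s_j be the s_i of least
   (resp. greatest) welfare.  Variedness gives u_i(s_j) <= beta u_i(s_i)
   (resp. u_i(s_i) <= beta u_i(s_j)); summing over i yields
   min_D sw <= sw(s_j) <= alpha beta sw(t), resp.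
   sw(t) <= alpha beta sw(s_j) <= alpha beta max_D sw.  As the extrema need
   not be attained, each s_i is only chosen up to e / #|I|, and these errors
   add up to an arbitrary e > 0. *)

Lemma sumrD_div_card (R : numFieldType) (I : finType) (i0 : I) (f : I -> R) e :
  \sum_i (f i + e / #|I|%:R) = \sum_i f i + e.
Proof.
rewrite big_split /= sumr_const -[_ *+ _]mulr_natr divfK // pnatr_eq0 -lt0n.
by apply/card_gt0P; exists i0.
Qed.

Section Varied.
Variables (R : realType) (I : finType) (X : I -> Type).
Variables (u : I -> profile X -> R) (D : set (profile X)) (beta : R) (i0 : I).
Hypothesis beta_gt0 : 0 < beta.
Hypothesis varied_D : forall i, varied u beta i D.

Lemma varied_min_sw_le_sum (s : I -> profile X) (j : I) :
  (forall i, D (s i)) -> (forall k, sw u (s j) <= sw u (s k)) ->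
  sw u (s j) / beta <= \sum_i u i (s i).
Proof.
by move=> Ds jmin; rewrite /sw mulr_suml; apply: ler_sum => i _; apply: varied_D.
Qed.

Lemma varied_sum_le_max_sw (s : I -> profile X) (j : I) :
  (forall i, D (s i)) -> (forall k, sw u (s k) <= sw u (s j)) ->
  \sum_i u i (s i) <= beta * sw u (s j).
Proof.
move=> Ds jmax; rewrite /sw mulr_sumr; apply: ler_sum => i _.
by rewrite -ler_pdivrMl // mulrC; apply: varied_D.
Qed.

Let card_gt0 : 0 < #|I|%:R :> R.
Proof. by rewrite ltr0n; apply/card_gt0P; exists i0. Qed.

Lemma varied_inf_sw_le_sum (m : R) (c : I -> R) :
  (forall d, D d -> m <= sw u d) ->
  (forall i, (ereal_inf [set (u i s)%:E | s in D] <= (c i)%:E)%E) ->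
  m / beta <= \sum_i c i.
Proof.
move=> m_lb inf_le; apply/ler_addgt0Pr => e e_gt0.
have near_inf i : exists s, D s /\ u i s < c i + e / #|I|%:R.
  have /ereal_inf_lt[_ [s Ds <-]] :
      (ereal_inf [set (u i s)%:E | s in D] < (c i + e / #|I|%:R)%:E)%E.
    by apply: le_lt_trans (inf_le i) _; rewrite lte_fin ltrDl divr_gt0.
  by exists s; rewrite -lte_fin.
have [s s_near] := choice near_inf.
have Ds i : D (s i) by case: (s_near i).
have [j _ jmin] := arg_minP (sw u \o s) (erefl : xpredT i0).
apply: (@le_trans _ _ (sw u (s j) / beta)).
  by rewrite ler_pM2r ?invr_gt0 //; apply: m_lb.
apply: le_trans (@varied_min_sw_le_sum s j Ds (fun k => jmin k isT)) _.
rewrite -(sumrD_div_card i0); apply: ler_sum => i _.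
by apply: ltW; case: (s_near i).
Qed.

Lemma varied_sum_le_sup_sw (m : R) (c : I -> R) :
  (forall d, D d -> sw u d <= m) ->
  (forall i, ((c i)%:E <= ereal_sup [set (u i s)%:E | s in D])%E) ->
  \sum_i c i <= beta * m.
Proof.
move=> m_ub sup_ge; apply/ler_addgt0Pr => e e_gt0.
have near_sup i : exists s, D s /\ c i < u i s + e / #|I|%:R.
  have /ereal_sup_gt[_ [s Ds <-]] :
      ((c i - e / #|I|%:R)%:E < ereal_sup [set (u i s)%:E | s in D])%E.
    by apply: lt_le_trans (sup_ge i); rewrite lte_fin gtrDl oppr_lt0 divr_gt0.
  by exists s; rewrite -ltrBlDr -lte_fin.
have [s s_near] := choice near_sup.
have Ds i : D (s i) by case: (s_near i).
have [j _ jmax] := arg_maxP (sw u \o s) (erefl : xpredT i0).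
apply: (@le_trans _ _ (\sum_i u i (s i) + e)).
  rewrite -(sumrD_div_card i0); apply: ler_sum => i _.
  by apply: ltW; case: (s_near i).
rewrite lerD2r.
apply: le_trans (@varied_sum_le_max_sw s j Ds (fun k => jmax k isT)) _.
by rewrite ler_pM2l //; apply: m_ub.
Qed.

End Varied.

Section Transitions.
Variables (R : realType) (I : finType) (X : I -> Type).
Variables (u : I -> profile X -> R) (D : set (profile X)) (alpha beta : R).
Variable i0 : I.
Hypotheses (alpha_gt0 : 0 < alpha) (beta_gt0 : 0 < beta).

Lemma lower_dependent_inf_le i t :
  lower_dependent u alpha i D -> transitions D t ->
  (ereal_inf [set (u i s)%:E | s in D] <= (u i t * alpha)%:E)%E.
Proof.
move=> low Tt; rewrite EFinM -lee_pdivrMr //.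
by apply: le_trans low _; apply: ereal_inf_lbound; exists t.
Qed.

Lemma upper_dependent_le_sup i t :
  upper_dependent u alpha i D -> transitions D t ->
  ((u i t / alpha)%:E <= ereal_sup [set (u i s)%:E | s in D])%E.
Proof.
move=> up Tt; rewrite EFinM lee_pdivrMr // muleC.
by apply: le_trans up; apply: ereal_sup_ubound; exists t.
Qed.

Lemma inf_sw_transitions_ge :
  (forall i, varied u beta i D /\ lower_dependent u alpha i D) ->
  (ereal_inf [set (sw u s)%:E | s in D] * ((alpha * beta)^-1)%:E
     <= ereal_inf [set (sw u s)%:E | s in transitions D])%E.
Proof.
move=> hyp; apply/ereal_infP => _ [t Tt <-].
have [d Dd _] := Tt i0.
have inf_le_d : (ereal_inf [set (sw u s)%:E | s in D] <= (sw u d)%:E)%E.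
  by apply: ereal_inf_lbound; exists d.
case inf_eq: (ereal_inf _) inf_le_d => [m| |] // _; last first.
  by rewrite gt0_mulNye ?leNye // lte_fin invr_gt0 mulr_gt0.
have m_lb d' : D d' -> m <= sw u d'.
  by move=> Dd'; rewrite -lee_fin -inf_eq; apply: ereal_inf_lbound; exists d'.
have := varied_inf_sw_le_sum i0 beta_gt0 (fun i => (hyp i).1) m_lb
  (fun i => lower_dependent_inf_le (hyp i).2 Tt).
rewrite -mulr_suml ler_pdivrMr // => m_le.
by rewrite -EFinM lee_fin invfM mulrA !ler_pdivrMr // mulrAC.
Qed.

Lemma sup_transitions_le_sw :
  (forall i, varied u beta i D /\ upper_dependent u alpha i D) ->
  (ereal_sup [set (sw u s)%:E | s in transitions D]
     <= (alpha * beta)%:E * ereal_sup [set (sw u s)%:E | s in D])%E.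
Proof.
move=> hyp; apply/ereal_supP => _ [t Tt <-].
have [d Dd _] := Tt i0.
have d_le_sup : ((sw u d)%:E <= ereal_sup [set (sw u s)%:E | s in D])%E.
  by apply: ereal_sup_ubound; exists d.
case sup_eq: (ereal_sup _) d_le_sup => [m| |] // _; last first.
  by rewrite gt0_muley ?leey // lte_fin mulr_gt0.
have m_ub d' : D d' -> sw u d' <= m.
  by move=> Dd'; rewrite -lee_fin -sup_eq; apply: ereal_sup_ubound; exists d'.
have := varied_sum_le_sup_sw i0 beta_gt0 (fun i => (hyp i).1) m_ub
  (fun i => upper_dependent_le_sup (hyp i).2 Tt).
by rewrite -mulr_suml -EFinM lee_fin ler_pdivrMr // mulrC mulrA.
Qed.

End Transitions.

Lemma maxS_gt0_card (R : realType) (I : finType) (X : I -> Type)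
    (u : I -> profile X -> R) :
  (0 < maxS u)%E -> (0 < #|I|)%N.
Proof.
move=> /ereal_sup_gt[_ [s _ <-]]; rewrite lte_fin; apply: contraTT.
by rewrite -leqNgt leqn0 -leNgt => /eqP/card0_eq I0; rewrite /sw big_pred0.
Qed.

Theorem proposition1 (R : realType) (I : finType) (X : I -> Type)
    (u : I -> profile X -> R) (D : set (profile X)) (alpha beta : R) :
  1 <= alpha -> 1 <= beta ->
  (0 < maxS u)%E -> (maxS u < +oo)%E ->
  ((forall i, varied u beta i D /\ lower_dependent u alpha i D) ->
     (PoA u D * ((alpha * beta)^-1)%:E <= PoTA u D)%E) /\
  ((forall i, varied u beta i D /\ upper_dependent u alpha i D) ->
     (PoTS u D <= (alpha * beta)%:E * PoS u D)%E).
Proof.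
move=> alpha_ge1 beta_ge1 maxS_gt0 maxS_fin.
have alpha_gt0 : 0 < alpha := lt_le_trans ltr01 alpha_ge1.
have beta_gt0 : 0 < beta := lt_le_trans ltr01 beta_ge1.
have /card_gt0P[i0 _] := maxS_gt0_card maxS_gt0.
have scale_gt0 : (0 < ((fine (maxS u))^-1)%:E)%E.
  by rewrite lte_fin invr_gt0 -lte_fin fineK ?gt0_fin_numE.
split=> hyp.
- rewrite /PoA /PoTA muleAC lee_pmul2r //.
  exact: inf_sw_transitions_ge.
- rewrite /PoS /PoTS muleA lee_pmul2r //.
  exact: sup_transitions_le_sw.
Qed.
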